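(* Let $\mathcal{Q}$ be a poset and $\mathfrak A,\mathfrak X$ algebras on $\mathcal{Q}$. The following are equivalent: 1. for every finitely $\mathfrak X$-encoded persistence module $M$ over $\mathcal{Q}$, the Hilbert function $q\mapsto\dim M(q)$ is $\mathfrak A$-measurable; 2. every upset $U\subseteq\mathcal{Q}$ with $U\in\mathfrak X$ belongs to $\mathfrak A$, equivalently $\mathfrak X_{\mathrm{Up}}\subseteq\mathfrak A$. Moreover, the implication (2)$\Rightarrow$(1) remains valid when $\mathrm{Vect}$ is replaced by any abelian category $\mathcal{A}$ and the Hilbert function by $q\mapsto\alpha(A(q))$ for any amplitude $\alpha$ on $\mathcal{A}$, for every finitely $\mathfrak X$-encoded object $A$ of $\mathcal{A}^{\mathcal{Q}}$.
   Context: $\mathrm{Vect}$ is the category of finite-dimensional vector spaces over a field; a persistence module over $\mathcal{Q}$ is a functor $\mathcal{Q}\to\mathrm{Vect}$. An algebra on a set is a family of subsets containing $\emptyset$, closed under complements and finite unions. An upset $U$ satisfies $u\in U,u\le q\Rightarrow q\in U$. $\mathfrak X_{\mathrm{Up}}$ is the algebra generated by the upsets belonging to $\mathfrak X$. An object $A$ of a functor category $\mathcal{C}^{\mathcal{Q}}$ is finitely $\mathfrak X$-encoded if there are a finite poset $\mathcal P$, an order-preserving map $e\colon\mathcal{Q}\to\mathcal P$ with every fiber $e^{-1}(p)\in\mathfrak X$, an object $A'\in\mathcal{C}^{\mathcal P}$ (pointwise finite-dimensional when $\mathcal{C}=\mathrm{Vect}$) and an isomorphism $A\cong A'\circ e$.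 A function $g\colon\mathcal{Q}\to[0,\infty]$ is $\mathfrak A$-measurable if the preimage of every Borel subset of $[0,\infty]$ lies in $\mathfrak A$. An amplitude on an abelian category $\mathcal{A}$ is a function $\alpha\colon\operatorname{ob}\mathcal{A}\to[0,\infty]$ with $\alpha(0)=0$, $\alpha(A)\le\alpha(B)$, $\alpha(C)\le\alpha(B)$ and $\alpha(B)\le\alpha(A)+\alpha(C)$ for every short exact sequence $0\to A\to B\to C\to0$. *)

From HB Require Import structures.
From mathcomp Require Import all_boot all_order all_algebra.
From mathcomp Require Import all_classical all_reals all_analysis measurable_realfun.
Set Implicit Arguments. Unset Strict Implicit. Unset Printing Implicit Defensive.
Import Order.TTheory GRing.Theory Num.Theory.
Local Open Scope classical_set_scope.
Local Open Scope ring_scope.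

Definition is_algebra (T : Type) (A : set (set T)) : Prop :=
  [/\ A set0, (forall U, A U -> A (~` U)) & (forall U V, A U -> A V -> A (U `|` V))].

Definition gen_algebra (T : Type) (G : set (set T)) : set (set T) :=
  fun U => forall B : set (set T), is_algebra B -> G `<=` B -> B U.

Definition upset (d : Order.disp_t) (Q : porderType d) (U : set Q) : Prop :=
  forall u q : Q, U u -> (u <= q)%O -> U q.

Definition X_Up (d : Order.disp_t) (Q : porderType d) (X : set (set Q)) : set (set Q) :=
  gen_algebra (fun U => X U /\ upset U).

Definition measurable_wrt (R : realType) (T : Type) (A : set (set T))
  (g : T -> \bar R) : Prop :=
  forall B : set (\bar R), measurable B -> B `<=` [set x | (0 <= x)%E] ->
    A (g @^-1` B).

Record pmod (K : fieldType) (d : Order.disp_t) (Q : porderType d) := PMod {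
  pm_obj : Q -> vectType K;
  pm_map : forall p q : Q, (p <= q)%O -> 'Hom(pm_obj p, pm_obj q);
  pm_id : forall (p : Q) (h : (p <= p)%O), pm_map h = \1%VF;
  pm_comp : forall (p q r : Q) (hpq : (p <= q)%O) (hqr : (q <= r)%O) (hpr : (p <= r)%O),
      pm_map hpr = (pm_map hqr \o pm_map hpq)%VF
}.

Definition pmod_iso (K : fieldType) (d : Order.disp_t) (Q : porderType d)
  (M N : pmod K Q) : Prop :=
  exists (phi : forall q, 'Hom(pm_obj M q, pm_obj N q))
         (psi : forall q, 'Hom(pm_obj N q, pm_obj M q)),
    [/\ forall q, (psi q \o phi q)%VF = \1%VF,
        forall q, (phi q \o psi q)%VF = \1%VF
      & forall (p q : Q) (h : (p <= q)%O),
          (phi q \o pm_map M h)%VF = (pm_map N h \o phi p)%VF].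

Definition monotone_map (d d' : Order.disp_t) (Q : porderType d) (P : porderType d')
  (e : Q -> P) : Prop := forall x y : Q, (x <= y)%O -> (e x <= e y)%O.

Section Pullback.
Variables (K : fieldType) (d d' : Order.disp_t) (Q : porderType d) (P : porderType d').
Variables (e : Q -> P) (he : monotone_map e) (N : pmod K P).

Lemma pullback_id (p : Q) (h : (p <= p)%O) : pm_map N (he h) = \1%VF.
Proof. exact: pm_id. Qed.

Lemma pullback_comp (p q r : Q) (hpq : (p <= q)%O) (hqr : (q <= r)%O) (hpr : (p <= r)%O) :
  pm_map N (he hpr) = (pm_map N (he hqr) \o pm_map N (he hpq))%VF.
Proof. exact: pm_comp. Qed.

Definition pmod_pullback : pmod K Q :=
  @PMod K d Q (fun q => pm_obj N (e q)) (fun p q h => pm_map N (he h))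
    pullback_id pullback_comp.
End Pullback.

Definition fin_encoded_pmod (K : fieldType) (d : Order.disp_t) (Q : porderType d)
  (X : set (set Q)) (M : pmod K Q) : Prop :=
  exists (dP : Order.disp_t) (P : finPOrderType dP) (e : Q -> P) (he : monotone_map e),
    (forall p : P, X (e @^-1` [set p])) /\
    exists N : pmod K P, pmod_iso M (pmod_pullback he N).

Definition hilbert (R : realType) (K : fieldType) (d : Order.disp_t) (Q : porderType d)
  (M : pmod K Q) : Q -> \bar R :=
  fun q => ((\dim (fullv : {vspace pm_obj M q}))%:R)%:E.

Record precat := PreCat {
  cobj :> Type;
  chom : cobj -> cobj -> zmodType;
  cid : forall a, chom a a;
  ccomp : forall a b c, chom b c -> chom a b -> chom a c;
  ccompA : forall a b c e (f : chom c e) (g : chom b c) (h : chom a b),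
      ccomp f (ccomp g h) = ccomp (ccomp f g) h;
  ccomp1l : forall a b (f : chom a b), ccomp (cid b) f = f;
  ccomp1r : forall a b (f : chom a b), ccomp f (cid a) = f;
  ccompDl : forall a b c (f g : chom b c) (h : chom a b),
      ccomp (f + g) h = ccomp f h + ccomp g h;
  ccompDr : forall a b c (f : chom b c) (g h : chom a b),
      ccomp f (g + h) = ccomp f g + ccomp f h
}.

Section AbelianDefs.
Variable C : precat.

Definition is_zero_obj (z : C) : Prop :=
  (forall a (f g : chom a z), f = g) /\ (forall a (f g : chom z a), f = g).

Definition is_biproduct (a b c : C) (p1 : chom c a) (p2 : chom c b)
  (i1 : chom a c) (i2 : chom b c) : Prop :=
  [/\ ccomp p1 i1 = cid a, ccomp p2 i2 = cid b, ccomp p1 i2 = 0, ccomp p2 i1 = 0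
    & ccomp i1 p1 + ccomp i2 p2 = cid c].

Definition is_mono (a b : C) (f : chom a b) : Prop :=
  forall x (g h : chom x a), ccomp f g = ccomp f h -> g = h.

Definition is_epi (a b : C) (f : chom a b) : Prop :=
  forall x (g h : chom b x), ccomp g f = ccomp h f -> g = h.

Definition is_kernel (a b k : C) (f : chom a b) (m : chom k a) : Prop :=
  ccomp f m = 0 /\
  forall x (g : chom x a), ccomp f g = 0 -> exists! u : chom x k, ccomp m u = g.

Definition is_cokernel (a b k : C) (f : chom a b) (c : chom b k) : Prop :=
  ccomp c f = 0 /\
  forall x (g : chom b x), ccomp g f = 0 -> exists! u : chom k x, ccomp u c = g.

Definition is_abelian : Prop :=
  [/\ (exists z : C, is_zero_obj z),
      (forall a b : C, exists (c : C) (p1 : chom c a) (p2 : chom c b) i1 i2,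
        is_biproduct p1 p2 i1 i2),
      (forall (a b : C) (f : chom a b), exists (k : C) (m : chom k a), is_kernel f m)
    & (forall (a b : C) (f : chom a b), exists (k : C) (c : chom b k), is_cokernel f c)]
  /\ (forall (a b : C) (f : chom a b), is_mono f ->
        exists (c : C) (g : chom b c), is_kernel g f)
  /\ (forall (a b : C) (f : chom a b), is_epi f ->
        exists (k : C) (g : chom k a), is_cokernel g f).

Definition short_exact (a b c : C) (f : chom a b) (g : chom b c) : Prop :=
  [/\ is_mono f, is_epi g & is_kernel g f].

Definition amplitude (R : realType) (alpha : C -> \bar R) : Prop :=
  [/\ forall a : C, (0 <= alpha a)%E,
      forall z : C, is_zero_obj z -> alpha z = 0%E
    & forall (a b c : C) (f : chom a b) (g : chom b c), short_exact f g ->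
        [/\ (alpha a <= alpha b)%E, (alpha c <= alpha b)%E
          & (alpha b <= alpha a + alpha c)%E]].
End AbelianDefs.

Record cfunctor (C : precat) (d : Order.disp_t) (Q : porderType d) := CFun {
  cf_obj : Q -> C;
  cf_map : forall p q : Q, (p <= q)%O -> chom (cf_obj p) (cf_obj q);
  cf_id : forall (p : Q) (h : (p <= p)%O), cf_map h = cid _;
  cf_comp : forall (p q r : Q) (hpq : (p <= q)%O) (hqr : (q <= r)%O) (hpr : (p <= r)%O),
      cf_map hpr = ccomp (cf_map hqr) (cf_map hpq)
}.

Definition cfun_iso (C : precat) (d : Order.disp_t) (Q : porderType d)
  (F G : cfunctor C Q) : Prop :=
  exists (phi : forall q, chom (cf_obj F q) (cf_obj G q))
         (psi : forall q, chom (cf_obj G q) (cf_obj F q)),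
    [/\ forall q, ccomp (psi q) (phi q) = cid _,
        forall q, ccomp (phi q) (psi q) = cid _
      & forall (p q : Q) (h : (p <= q)%O),
          ccomp (phi q) (cf_map F h) = ccomp (cf_map G h) (phi p)].

Section CPullback.
Variables (C : precat) (d d' : Order.disp_t) (Q : porderType d) (P : porderType d').
Variables (e : Q -> P) (he : monotone_map e) (N : cfunctor C P).

Lemma cpullback_id (p : Q) (h : (p <= p)%O) : cf_map N (he h) = cid _.
Proof. exact: cf_id. Qed.

Lemma cpullback_comp (p q r : Q) (hpq : (p <= q)%O) (hqr : (q <= r)%O) (hpr : (p <= r)%O) :
  cf_map N (he hpr) = ccomp (cf_map N (he hqr)) (cf_map N (he hpq)).
Proof. exact: cf_comp. Qed.

Definition cfun_pullback : cfunctor C Q :=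
  @CFun C d Q (fun q => cf_obj N (e q)) (fun p q h => cf_map N (he h))
    cpullback_id cpullback_comp.
End CPullback.

Definition fin_encoded_cfun (C : precat) (d : Order.disp_t) (Q : porderType d)
  (X : set (set Q)) (F : cfunctor C Q) : Prop :=
  exists (dP : Order.disp_t) (P : finPOrderType dP) (e : Q -> P) (he : monotone_map e),
    (forall p : P, X (e @^-1` [set p])) /\
    exists N : cfunctor C P, cfun_iso F (cfun_pullback he N).

(* If every upset of X lies in A, then so does every fiber of an encoding e : Q -> P,
   since e^-1(p) = e^-1(>= p) \ e^-1(> p) is a difference of two upsets of X.
   The Hilbert function q |-> dim M(q), or q |-> alpha(F q), of an encoded object factors
   through the finite poset P, because isomorphic objects have the same dimension
   (amplitude); so its preimages are finite unions of fibers and lie in A. Conversely, for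
   an upset U in X the indicator module k_U is encoded by the characteristic map
   Q -> bool, and the preimage of 1 under its Hilbert function is U. *)
From Pilot Require Import Defs.
From HB Require Import structures.
From mathcomp Require Import all_boot all_order all_algebra.
From mathcomp Require Import all_classical all_reals all_analysis measurable_realfun.
Set Implicit Arguments. Unset Strict Implicit. Unset Printing Implicit Defensive.
Import Order.TTheory GRing.Theory Num.Theory.
Local Open Scope classical_set_scope.
Local Open Scope ring_scope.

Section AlgebraClosure.
Variables (T : Type) (B : set (set T)).
Hypothesis algB : is_algebra B.

Lemma algebraC U : B U -> B (~` U).
Proof. by case: algB => _ + _; apply. Qed.

Lemma algebraU U V : B U -> B V -> B (U `|` V).
Proof. by case: algB => _ _; apply. Qed.

Lemma algebraD U V : B U -> B V -> B (U `\` V).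
Proof.
by move=> BU BV; rewrite setDE -[U]setCK -setCU; apply/algebraC/algebraU => //; apply: algebraC.
Qed.

Lemma algebra_bigU (I : Type) (s : seq I) (F : I -> set T) (P : pred I) :
  (forall i, P i -> B (F i)) -> B (\big[setU/set0]_(i <- s | P i) F i).
Proof. by apply: big_ind => //; [case: algB | exact: algebraU]. Qed.

Lemma algebra_preimage_fin (P : finType) (e : T -> P) :
  (forall p, B (e @^-1` [set p])) -> forall S : set P, B (e @^-1` S).
Proof.
move=> Bfib S.
suff -> : e @^-1` S = \big[setU/set0]_(p | p \in S) e @^-1` [set p].
  exact: algebra_bigU.
apply/seteqP; split => [x Sx | ].
  by rewrite (bigD1 (e x)) ?inE //=; left.
apply: (big_ind (fun Y => Y `<=` e @^-1` S)) => //.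
  by move=> Y Z; rewrite subUset.
by move=> p /set_mem Sp x /= ->.
Qed.

End AlgebraClosure.

Lemma gen_algebra_sub (T : Type) (G B : set (set T)) :
  is_algebra B -> G `<=` B -> gen_algebra G `<=` B.
Proof. by move=> algB GB U; apply. Qed.

Lemma sub_gen_algebra (T : Type) (G : set (set T)) : G `<=` gen_algebra G.
Proof. by move=> U GU B _; apply. Qed.

Section Encoding.
Variables (d dP : Order.disp_t) (Q : porderType d) (P : finPOrderType dP).
Variables (e : Q -> P) (he : monotone_map e) (A X : set (set Q)).
Hypotheses (algA : is_algebra A) (algX : is_algebra X).
Hypothesis Xfib : forall p : P, X (e @^-1` [set p]).
Hypothesis upXA : forall U : set Q, upset U -> X U -> A U.

Lemma upset_preimage_ge (p : P) : upset (e @^-1` [set p' | (p <= p')%O]).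
Proof. by move=> u q /= pu uq; apply: le_trans pu (he uq). Qed.

Lemma upset_preimage_gt (p : P) : upset (e @^-1` [set p' | (p < p')%O]).
Proof. by move=> u q /= pu uq; apply: lt_le_trans pu (he uq). Qed.

Lemma preimage_set1_ge_gt (p : P) :
  e @^-1` [set p] = e @^-1` [set p' | (p <= p')%O] `\` e @^-1` [set p' | (p < p')%O].
Proof.
apply/seteqP; split => x /=; first by move=> ->; rewrite lexx ltxx.
by case=> pex; rewrite lt_neqAle pex andbT => /negP; rewrite negbK => /eqP.
Qed.

Lemma encoding_preimage_in_algebra (S : set P) : A (e @^-1` S).
Proof.
apply: algebra_preimage_fin => // p; rewrite preimage_set1_ge_gt.
apply: algebraD => //; apply: upXA;
  by [exact: upset_preimage_ge | exact: upset_preimage_gt | exact: algebra_preimage_fin].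
Qed.

Lemma measurable_wrt_factor (R : realType) (g : Q -> \bar R) (h : P -> \bar R) :
  (forall q, g q = h (e q)) -> measurable_wrt A g.
Proof.
move=> gh Y _ _; rewrite (_ : g @^-1` Y = e @^-1` (h @^-1` Y)).
  exact: encoding_preimage_in_algebra.
by apply/seteqP; split => q /=; rewrite gh.
Qed.

End Encoding.

Lemma dim_le_retraction (K : fieldType) (V W : vectType K)
    (f : 'Hom(V, W)) (g : 'Hom(W, V)) :
  (g \o f)%VF = \1%VF -> (dim V <= dim W)%N.
Proof.
move=> gf; rewrite -!dimvf.
have -> : (fullv : {vspace V}) = (g @: (f @: fullv))%VS by rewrite -limg_comp gf lim1g.
apply: leq_trans (dimvS (subvf (f @: fullv))).
by rewrite -[leqRHS](limg_ker_dim g) leq_addl.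
Qed.

Lemma dim_iso (K : fieldType) (V W : vectType K) (f : 'Hom(V, W)) (g : 'Hom(W, V)) :
  (g \o f)%VF = \1%VF -> (f \o g)%VF = \1%VF -> dim V = dim W.
Proof.
by move=> gf fg; apply/eqP; rewrite eqn_leq (dim_le_retraction gf) (dim_le_retraction fg).
Qed.

Lemma hilbert_iso (R : realType) (K : fieldType) (d : Order.disp_t) (Q : porderType d)
    (M N : pmod K Q) :
  pmod_iso M N -> hilbert R M = hilbert R N.
Proof.
case=> phi [psi [psiphi phipsi _]]; apply/funext => q.
by rewrite /hilbert !dimvf (dim_iso (psiphi q) (phipsi q)).
Qed.

Section AmplitudeIso.
Variables (C : precat) (z : C).
Hypothesis zero_z : is_zero_obj z.

Lemma retraction_mono (a b : C) (f : chom a b) (g : chom b a) :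
  ccomp g f = Defs.cid a -> is_mono f.
Proof. by move=> gf x u v fufv; rewrite -(ccomp1l u) -(ccomp1l v) -gf -!ccompA fufv. Qed.

Lemma iso_short_exact (a b : C) (f : chom a b) (g : chom b a) :
  ccomp g f = Defs.cid a -> ccomp f g = Defs.cid b -> short_exact f (0 : chom b z).
Proof.
move=> gf fg; split; first exact: retraction_mono gf.
  by move=> x u v _; apply: zero_z.2.
split=> [|x h _]; first exact: zero_z.1.
exists (ccomp g h); split=> [|u fuh]; first by rewrite ccompA fg ccomp1l.
by apply: retraction_mono gf _ _ _ _; rewrite fuh ccompA fg ccomp1l.
Qed.

Lemma amplitude_iso (R : realType) (alpha : C -> \bar R) (a b : C)
    (f : chom a b) (g : chom b a) :
  amplitude alpha -> ccomp g f = Defs.cid a -> ccomp f g = Defs.cid b -> alpha a = alpha b.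
Proof.
case=> _ _ ampl gf fg.
have [le_ab _ _] := ampl _ _ _ _ _ (iso_short_exact gf fg).
have [le_ba _ _] := ampl _ _ _ _ _ (iso_short_exact fg gf).
by apply/le_anti; rewrite le_ab le_ba.
Qed.

End AmplitudeIso.

Section IndicatorModule.
Variables (K : fieldType) (d : Order.disp_t) (T : porderType d).
Variables (f : T -> bool) (hf : monotone_map f).

Definition indicator_obj (q : T) : vectType K := 'rV[K]_(f q).

(* The structure map k^(f p) -> k^(f q) is the identity when f p = f q and zero otherwise. *)
Definition indicator_map (p q : T) (_ : (p <= q)%O) :
    'Hom(indicator_obj p, indicator_obj q) :=
  linfun (mulmxr (pid_mx (f p) : 'M[K]_(f p, f q))).

Lemma indicator_map_id (p : T) (h : (p <= p)%O) : indicator_map h = \1%VF.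
Proof. by apply/lfunP => v; rewrite lfunE id_lfunE /= pid_mx_1 mulmx1. Qed.

Lemma indicator_map_comp (p q r : T) (hpq : (p <= q)%O) (hqr : (q <= r)%O)
    (hpr : (p <= r)%O) :
  indicator_map hpr = (indicator_map hqr \o indicator_map hpq)%VF.
Proof.
apply/lfunP => v; rewrite comp_lfunE !lfunE /= -mulmxA mul_pid_mx.
suff -> : minn (f q) (minn (f p) (f q)) = f p by [].
by have := hf hpq; case: (f p); case: (f q).
Qed.

Definition indicator_pmod : pmod K T :=
  PMod indicator_map_id indicator_map_comp.

Lemma hilbert_indicator_pmod (R : realType) (q : T) :
  hilbert R indicator_pmod q = (f q)%:R%:E.
Proof. by rewrite /hilbert dimvf /= dim_matrix mul1r. Qed.

Lemma hilbert_indicator_pmod_preimage1 (R : realType) :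
  hilbert R indicator_pmod @^-1` [set 1%E] = f @^-1` [set true].
Proof.
apply/seteqP; split => q /=; rewrite hilbert_indicator_pmod; last by move=> ->.
by case: (f q) => // /eqP; rewrite eqe pnatr_eq1.
Qed.

End IndicatorModule.

Lemma pmod_iso_refl (K : fieldType) (d : Order.disp_t) (Q : porderType d) (M : pmod K Q) :
  pmod_iso M M.
Proof.
exists (fun q => \1%VF), (fun q => \1%VF).
by split=> [q|q|p q h]; rewrite ?comp_lfun1l ?comp_lfun1r.
Qed.

Lemma indicator_pmod_fin_encoded (K : fieldType) (d : Order.disp_t) (Q : porderType d)
    (X : set (set Q)) (f : Q -> bool) (hf : monotone_map f) :
  is_algebra X -> X (f @^-1` [set true]) -> fin_encoded_pmod X (indicator_pmod K hf).
Proof.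
move=> algX Xf; have idb_mono : monotone_map (id : bool -> bool) by [].
exists Order.BoolOrder.bool_display, bool, f, hf; split.
  case=> //; rewrite (_ : _ @^-1` _ = ~` (f @^-1` [set true])); first exact: algebraC.
  by apply/seteqP; split => x /=; case: (f x).
by exists (indicator_pmod K idb_mono); exact: pmod_iso_refl.
Qed.

Lemma upset_asbool_monotone (d : Order.disp_t) (Q : porderType d) (U : set Q) :
  upset U -> monotone_map (fun q => `[< U q >]).
Proof.
move=> upU x y xy; case: (asboolP (U x)) => // Ux.
by rewrite (asboolT (upU _ _ Ux xy)).
Qed.

Theorem mainTheorem18 (R : realType) (K : fieldType) (d : Order.disp_t)
  (Q : porderType d) (A X : set (set Q)) (hA : is_algebra A) (hX : is_algebra X) :
  ((forall M : pmod K Q, fin_encoded_pmod X M -> measurable_wrt A (hilbert R M)) <->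
   (forall U : set Q, upset U -> X U -> A U))
  /\ ((forall U : set Q, upset U -> X U -> A U) <-> X_Up X `<=` A)
  /\ (forall (C : precat) (alpha : C -> \bar R),
        is_abelian C -> amplitude alpha ->
        (forall U : set Q, upset U -> X U -> A U) ->
        forall F : cfunctor C Q, fin_encoded_cfun X F ->
          measurable_wrt A (fun q => alpha (cf_obj F q))).
Proof.
split; [split|split; [split|]].
- move=> measH U upU XU.
  have chiU := upset_asbool_monotone upU.
  have fibU : (fun q => `[< U q >]) @^-1` [set true] = U.
    by apply/seteqP; split => q /= /asboolP.
  rewrite -fibU -(hilbert_indicator_pmod_preimage1 K chiU R).
  apply: (measH _ _ [set 1%E] (emeasurable_set1 _)); last by move=> _ ->; rewrite /= lee01.
  by apply: indicator_pmod_fin_encoded; rewrite ?fibU.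
- move=> upXA M [dP [P [e [he [Xfib [N isoMN]]]]]].
  rewrite (hilbert_iso R isoMN).
  exact: (measurable_wrt_factor he hA hX Xfib upXA (h := hilbert R N)).
- by move=> upXA; apply: gen_algebra_sub => // U [XU /upXA]; apply.
- by move=> upA U upU XU; apply: upA; apply: sub_gen_algebra.
- move=> C alpha [[[z zero_z] _ _ _] _] ampl upXA F.
  case=> dP [P [e [he [Xfib [N [phi [psi [psiphi phipsi _]]]]]]]].
  apply: (measurable_wrt_factor he hA hX Xfib upXA (h := fun p => alpha (cf_obj N p))).
  by move=> q; exact: (amplitude_iso zero_z ampl (psiphi q) (phipsi q)).
Qed.
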